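(* Let $\sigma\subseteq E_0$ be a reasonable strategy of player $0$ in the escape arena $\mathcal{A}_\bot$. Define $\mathcal{V}_\bot:V\cup\{\bot\}\to\mathcal{P}$ by $\mathcal{V}_\bot(\bot)=\text{\o}$ and $\mathcal{V}_\bot(s)=\infty$ for $s\in V$, and the operator $F_\sigma$ on maps $\mathcal{V}:V\cup\{\bot\}\to\mathcal{P}$ by $F_\sigma[\mathcal{V}](\bot)=\text{\o}$, $F_\sigma[\mathcal{V}](s)=\wp(s)+\min^{\preceq}\{\mathcal{V}(t)\mid (s,t)\in E_1\}$ if $s\in V_1$, and $F_\sigma[\mathcal{V}](s)=\wp(s)+\max^{\preceq}\{\mathcal{V}(t)\mid (s,t)\in\sigma\}$ if $s\in V_0$. Then the valuation $\mathcal{V}_\sigma$ is the limit of the sequence $F_\sigma^i[\mathcal{V}_\bot]$ as $i\to\infty$, and this limit is reached after at most $|V|$ iterations.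
   Context: Parity game arena: $\mathcal{A}=(V,E,o,c)$ with $V$ finite, $E\subseteq V\times V$, every vertex has a successor, owner map $o:V\to\{0,1\}$, colouring $c:V\to\{0,\dots,d-1\}$; $V_i=o^{-1}(i)$. An infinite vertex sequence is won by player $0$ iff the largest colour occurring infinitely often is even. A cycle is $i$-dominated if its largest colour has parity $i$. Escape arena $\mathcal{A}_\bot$: vertices $V\cup\{\bot\}$, edges $E\cup(V_0\times\{\bot\})$, $\bot$ owned by player $0$ with no outgoing edges. $E_0$ = edges of $\mathcal{A}_\bot$ leaving $V_0$, $E_1=E\cap(V_1\times V)$. A strategy of player $i$ is a set $\sigma\subseteq E_i$ with $s\sigma\neq\emptyset$ for all $s\in V_i$. $\mathcal{A}_\bot|_{\sigma,\tau}$ has edges $\sigma\cup\tau$, $\mathcal{A}_\bot|_\sigma$ has edges $\sigma\cup E_1$; plays are maximal paths (infinite or ending in $\bot$). Colour profiles $\mathcal{P}=\mathbb{Z}^d\cup\{-\infty,\infty\}$, $\text{\o}$ zero vector; $\wp(s)$ unit vector at coordinate $c(s)$; for a finite path the sum over vertices in $V$; infinite play: $\infty$ if won by player $0$, else $-\infty$. Addition componentwise, $x+\pm\infty=\pm\infty$. Order $\prec$: $-\infty$ least, $\infty$ greatest; for distinct $p,p'\in\mathbb{Z}^d$ with $k$ the largest differing index, $p\prec p'$ iff ($k$ even, $p_k<p'_k$) or ($k$ odd, $p_k>p'_k$). Valuation: $\mathcal{V}_\sigma(\bot)=\text{\o}$, $\mathcal{V}_\sigma(s)=\min^\prec_\tau\max^\prec\{\wp(\pi)\mid\pi$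 a play in $\mathcal{A}_\bot|_{\sigma,\tau}$ from $s\}$, min over player-$1$ strategies $\tau$. $\sigma$ is reasonable if $\mathcal{A}_\bot|_\sigma$ has no $1$-dominated cycle. *)

From HB Require Import structures.
From mathcomp Require Import all_boot all_order all_algebra.
Set Implicit Arguments. Unset Strict Implicit. Unset Printing Implicit Defensive.
Import Order.TTheory GRing.Theory Num.Theory.
Local Open Scope ring_scope.

(* Colour profiles  P = Z^d ∪ {-oo, +oo}.  Vectors are finite functions 'I_d -> int. *)
Inductive profile (d : nat) :=
  | PNegInf
  | PInf
  | PVec of {ffun 'I_d -> int}.
Arguments PNegInf {d}.
Arguments PInf {d}.

Section Profiles.
Variable d : nat.
Implicit Types p q : {ffun 'I_d -> int}.

Definition vec_lt p q : bool :=
  [exists k : 'I_d,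
     [&& p k != q k,
         [forall j : 'I_d, (k < j)%N ==> (p j == q j)] &
         (if odd k then q k < p k else p k < q k)]].

Definition prof_lt (x y : profile d) : bool :=
  match x, y with
  | PNegInf, PNegInf => false
  | PNegInf, _ => true
  | _, PNegInf => false
  | PInf, _ => false
  | _, PInf => true
  | PVec p, PVec q => vec_lt p q
  end.

Definition prof_le (x y : profile d) : bool :=
  match x, y with
  | PVec p, PVec q => (p == q) || vec_lt p q
  | PNegInf, _ => true
  | _, PNegInf => false
  | _, PInf => true
  | PInf, _ => false
  end.

Definition vadd p (x : profile d) : profile d :=
  match x with
  | PVec q => PVec (p + q)
  | PInf => PInf
  | PNegInf => PNegInf
  end.

Definition pmin2 (x y : profile d) := if prof_le x y then x else y.
Definition pmax2 (x y : profile d) := if prof_le x y then y else x.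
(* min / max (w.r.t. the order above) of a finite list; used on nonempty lists *)
Definition pmin (s : seq (profile d)) := foldr pmin2 PInf s.
Definition pmax (s : seq (profile d)) := foldr pmax2 PNegInf s.

Definition isMaxOf (S : profile d -> Prop) (x : profile d) :=
  S x /\ forall y, S y -> prof_le y x.
Definition isMinOf (S : profile d -> Prop) (x : profile d) :=
  S x /\ forall y, S y -> prof_le x y.
End Profiles.

Section Arena.
(* Arena A = (V, E, o, c): o v = false means v ∈ V_0, o v = true means v ∈ V_1.
   The escape arena has vertex set option V, with None = ⊥. *)
Variables (V : finType) (d : nat) (E : rel V) (o : V -> bool) (c : V -> 'I_d).

Definition E0 : {set V * option V} :=
  [set e | ~~ o e.1 && (if e.2 is Some t then E e.1 t else true)].
Definition E1 : {set V * option V} :=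
  [set e | o e.1 && (if e.2 is Some t then E e.1 t else false)].

Definition strategy0 (sigma : {set V * option V}) : Prop :=
  sigma \subset E0 /\ forall s, ~~ o s -> exists t, (s, t) \in sigma.
Definition strategy1 (tau : {set V * option V}) : Prop :=
  tau \subset E1 /\ forall s, o s -> exists t, (s, t) \in tau.

(* edge relation of A_⊥|_σ restricted to V (⊥ lies on no cycle) *)
Definition edge_sigma (sigma : {set V * option V}) (v w : V) : bool :=
  ((v, Some w) \in sigma) || ((v, Some w) \in E1).

Definition reasonable (sigma : {set V * option V}) : Prop :=
  forall cyc : seq V, cyc != [::] -> cycle (edge_sigma sigma) cyc ->
    ~~ odd (\max_(v <- cyc) (c v : nat)).

Definition st_edge (sigma tau : {set V * option V}) (u w : option V) : bool :=
  if u is Some a then ((a, w) \in sigma) || ((a, w) \in tau) else false.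

Definition wp (v : V) : {ffun 'I_d -> int} := [ffun i => ((i == c v) : nat)%:Z].

Definition path_profile (q : seq (option V)) : {ffun 'I_d -> int} :=
  \sum_(u <- q) (if u is Some v then wp v else 0).

Definition inf_often (f : nat -> option V) (k : nat) : Prop :=
  forall N, exists n, (N <= n)%N /\ exists v, f n = Some v /\ (c v : nat) = k.

Definition won0 (f : nat -> option V) : Prop :=
  exists k, inf_often f k /\ ~~ odd k /\ forall k', inf_often f k' -> (k' <= k)%N.

Definition PlayProfile (sigma tau : {set V * option V}) (s : V) (x : profile d) : Prop :=
  (exists p : seq (option V),
      path (st_edge sigma tau) (Some s) p /\
      (forall y, ~~ st_edge sigma tau (last (Some s) p) y) /\
      x = PVec (path_profile (Some s :: p)))
  \/
  (exists f : nat -> option V,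
      f 0%N = Some s /\ (forall n, st_edge sigma tau (f n) (f n.+1)) /\
      ((won0 f /\ x = PInf) \/ (~ won0 f /\ x = PNegInf))).

(* v is the valuation V_σ(x) = min_τ max {℘(π) | π play of A_⊥|_{σ,τ} from x}
   (asserting in particular that all these max / min exist) *)
Definition Valuation (sigma : {set V * option V}) (x : option V) (v : profile d) : Prop :=
  match x with
  | None => v = PVec 0
  | Some s =>
      (forall tau, strategy1 tau -> exists m, isMaxOf (PlayProfile sigma tau s) m) /\
      isMinOf (fun m => exists tau, strategy1 tau /\ isMaxOf (PlayProfile sigma tau s) m) v
  end.

Definition Vbot : option V -> profile d :=
  fun x => if x is Some _ then PInf else PVec 0.

Definition Fsigma (sigma : {set V * option V}) (W : option V -> profile d)
  : option V -> profile d :=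
  fun x =>
    match x with
    | None => PVec 0
    | Some s =>
        if o s then
          vadd (wp s) (pmin [seq W t | t <- enum [pred t : option V | (s, t) \in E1]])
        else
          vadd (wp s) (pmax [seq W t | t <- enum [pred t : option V | (s, t) \in sigma]])
    end.
End Arena.

(* The iterates W_i of F_sigma from V_bot decrease, so once player 1 is fixed to
   move to a successor minimising W_i, they satisfy W_i(s) >= wp(s) + W_i(t)
   along every edge.  Such a map bounds all play profiles from above: plays
   reaching bot by induction, and infinite plays because reasonableness makes
   every cycle 0-dominated, of positive profile, which forces W_i = oo along
   them.  Conversely, against any player-1 strategy, following the edges that
   realise the max/min in W_{i+1} yields either a play reaching bot whose
   profile is at least W_i(s), or a path of length i >= |V| avoiding bot; it
   repeats a vertex and closes into an infinite play, which is won by player 0.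
   The same argument for the one-player operator of a fixed strategy shows that
   every maximum over plays exists. *)

From mathcomp Require Import all_boot all_order all_algebra.
From Stdlib Require Import Classical FunctionalExtensionality.
Set Implicit Arguments. Unset Strict Implicit. Unset Printing Implicit Defensive.
Import Order.TTheory GRing.Theory Num.Theory.

Section Runs.
Variables (T : Type) (e : rel T) (g : nat -> T).
Hypothesis g_step : forall n, e (g n) (g n.+1).

Lemma path_map_iota m i : path e (g i) (map g (iota i.+1 m)).
Proof. by elim: m i => //= m IH i; rewrite g_step IH. Qed.

Lemma cycle_map_iota i j : i < j -> g j = g i -> cycle e (map g (iota i (j - i))).
Proof.
move=> ij gji; rewrite -(subnSK ij) /= -cats1.
have -> : map g (iota i.+1 (j - i.+1)) ++ [:: g i] = map g (iota i.+1 (j - i.+1).+1).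
  by rewrite -[(j - i.+1).+1]addn1 iotaD map_cat subnKC // /= gji.
exact: path_map_iota.
Qed.
End Runs.

Lemma path_lasso (T : Type) (e : rel T) x l i j :
  path e x l -> i < j -> j <= size l ->
  nth x (x :: l) i = nth x (x :: l) j ->
  exists f : nat -> T, f 0 = x /\ forall n, e (f n) (f n.+1).
Proof.
move=> /(pathP x) steps ij jl loop.
pose next k := if k.+1 == j then i else k.+1.
have next_lt k : k < j -> next k < j.
  by rewrite /next; case: eqP => [_ //|/eqP ne kj]; rewrite ltn_neqAle ne.
have next_nth k : nth x (x :: l) (next k) = nth x (x :: l) k.+1.
  by rewrite /next; case: eqP => [->|].
pose idx n := iter n next 0.
have idx_lt n : idx n < j by elim: n => [|n IH]; [apply: leq_ltn_trans ij|apply: next_lt].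
exists (fun n => nth x (x :: l) (idx n)); split=> // n.
by rewrite [idx n.+1]/= next_nth; apply: steps; apply: leq_trans (idx_lt n) jl.
Qed.

Lemma finite_run_repeats (T : finType) (g : nat -> T) :
  exists i j, i < j /\ g i = g j.
Proof.
have : ~~ uniq (map g (iota 0 #|T|.+1)).
  apply/negP => /card_uniqP; rewrite size_map size_iota => card_big.
  by move: (max_card (mem (map g (iota 0 #|T|.+1)))); rewrite card_big ltnn.
case/(uniqPn (g 0)) => i [j [ij]]; rewrite size_map size_iota ltnS => jT.
have iT : i < #|T|.+1 by apply: leq_ltn_trans (ltnW ij) _.
by rewrite !(nth_map 0) ?size_iota // !nth_iota // => gij; exists i, j.
Qed.

Lemma ex_maxn_bounded (P : nat -> Prop) b :
  (exists k, P k) -> (forall k, P k -> k <= b) ->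
  exists k, P k /\ forall k', P k' -> k' <= k.
Proof.
elim: b => [|b IH] [k Pk] le_b.
  by exists k; split=> // k' /le_b; rewrite leqn0 => /eqP->.
case: (classic (P b.+1)) => [Pb|nPb]; first by exists b.+1.
apply: IH; first by exists k.
move=> k' Pk'; have := le_b k' Pk'; rewrite leq_eqVlt => /orP[/eqP eqb|//].
by rewrite eqb in Pk'.
Qed.

Definition inf_visited (T : Type) (g : nat -> T) (v : T) : Prop :=
  forall N, exists n, N <= n /\ g n = v.

Lemma eventually_inf_visited (T : finType) (g : nat -> T) :
  exists N, forall n, N <= n -> inf_visited g (g n).
Proof.
have finite_visits (l : seq T) : exists N, forall v, v \in l ->
    inf_visited g v \/ forall n, N <= n -> g n != v.
  elim: l => [|v l [N1 HN1]]; first by exists 0.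
  case: (classic (inf_visited g v)) => [infv|/not_all_ex_not[N2 finv]].
    by exists N1 => u; rewrite in_cons => /orP[/eqP->|/HN1]; [left|].
  exists (maxn N1 N2) => u; rewrite in_cons => /orP[/eqP->|/HN1[|fin]]; [right|left|right]=> //.
    move=> n; rewrite geq_max => /andP[_ n2]; apply/eqP => gn.
    by apply: finv; exists n.
  by move=> n; rewrite geq_max => /andP[n1 _]; apply: fin.
have [N HN] := finite_visits (enum T); exists N => n Nn.
by case: (HN (g n) (mem_enum _ _)) => // /(_ n Nn); rewrite eqxx.
Qed.

Local Open Scope ring_scope.

Section ProfileOrder.
Variable d : nat.
Implicit Types (a p q r : {ffun 'I_d -> int}) (x y z : profile d).

Lemma vec_ltP p q : reflect (exists k : 'I_d, [/\ p k != q k,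
    (forall j : 'I_d, (k < j)%N -> p j = q j) &
    (if odd k then q k < p k else p k < q k)]) (vec_lt p q).
Proof.
apply: (iffP existsP) => [[k /and3P[pq /forallP above ltk]]|[k [pq above ltk]]].
  by exists k; split=> // j kj; apply/eqP; move: (above j); rewrite kj.
exists k; apply/and3P; split=> //.
by apply/forallP => j; apply/implyP => kj; rewrite above.
Qed.

Lemma vec_ltxx p : vec_lt p p = false.
Proof. by apply/vec_ltP => -[k [/eqP]]. Qed.

Lemma vec_lt_trans p q r : vec_lt p q -> vec_lt q r -> vec_lt p r.
Proof.
move=> /vec_ltP[k1 [ne1 above1 lt1]] /vec_ltP[k2 [ne2 above2 lt2]]; apply/vec_ltP.
have above (j : 'I_d) : (maxn k1 k2 < j)%N -> p j = r j.
  by rewrite gtn_max => /andP[j1 j2]; rewrite above1 ?above2.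
case: (ltngtP k1 k2) => [lt12|lt21|/val_inj eq12].
- exists k2; rewrite above1 //; split=> // j kj; apply: above.
  by rewrite (maxn_idPr (ltnW lt12)).
- exists k1; rewrite -above2 //; split=> // j kj; apply: above.
  by rewrite (maxn_idPl (ltnW lt21)).
- subst k2; have ltk : if odd k1 then r k1 < p k1 else p k1 < r k1.
    by case: (odd k1) lt1 lt2 => lt1 lt2; [apply: lt_trans lt2 lt1|apply: lt_trans lt1 lt2].
  exists k1; split=> //; last by move=> j kj; apply: above; rewrite maxnn.
  by case: (odd k1) ltk => ltk; rewrite ?(gt_eqF ltk) ?(lt_eqF ltk).
Qed.

Lemma vec_lt_total p q : p != q -> vec_lt p q || vec_lt q p.
Proof.
move=> npq; have [k0 neq0] : exists k, p k != q k.
  by apply/existsP; apply: contraR npq => /existsPn eqpq; apply/eqP/ffunP => k; apply/eqP/negPn.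
case: (@arg_maxnP _ k0 (fun k => p k != q k) (fun k : 'I_d => val k) neq0) => k neqk maxk.
have above (j : 'I_d) : (k < j)%N -> p j = q j.
  by move=> kj; apply/eqP; apply: contraTT kj => /maxk; rewrite -leqNgt.
have below (j : 'I_d) : (k < j)%N -> q j = p j by move/above.
have neqk' : q k != p k by rewrite eq_sym.
apply/orP; case/orP: (lt_total neqk) => lt; case oddk: (odd k);
  [right|left|left|right]; apply/vec_ltP; exists k; by rewrite oddk.
Qed.

Lemma vec_lt_add2l a p q : vec_lt (a + p) (a + q) = vec_lt p q.
Proof.
apply/vec_ltP/vec_ltP => -[k [neq above ltk]]; exists k; split.
- by move: neq; rewrite !ffunE (can_eq (addKr (a k))).
- by move=> j kj; move: (above j kj); rewrite !ffunE => /addrI.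
- by move: ltk; rewrite !ffunE !ltrD2l.
- by rewrite !ffunE (can_eq (addKr (a k))).
- by move=> j kj; rewrite !ffunE above.
- by rewrite !ffunE !ltrD2l.
Qed.

Lemma prof_le_refl x : prof_le x x.
Proof. by case: x => //= p; rewrite eqxx. Qed.

Lemma prof_le_top x : prof_le x PInf.
Proof. by case: x. Qed.

Lemma prof_le_bot x : prof_le PNegInf x.
Proof. by case: x. Qed.

Lemma prof_le_topE x : prof_le PInf x -> x = PInf.
Proof. by case: x. Qed.

Lemma prof_le_trans x y z : prof_le x y -> prof_le y z -> prof_le x z.
Proof.
case: x => [|//|p]; case: y => [|//|q]; case: z => [|//|r] //=.
case/orP=> [/eqP->//|pq]; case/orP=> [/eqP<-|qr]; first by rewrite pq orbT.
by rewrite (vec_lt_trans pq qr) orbT.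
Qed.

Lemma prof_le_total x y : prof_le x y || prof_le y x.
Proof.
case: x => [|//|p]; case: y => [|//|q] //=.
by case: (eqVneq p q) => [->|/vec_lt_total/orP[]->]; rewrite ?eqxx ?orbT.
Qed.

Lemma prof_le_anti x y : prof_le x y -> prof_le y x -> x = y.
Proof.
case: x => [|//|p]; case: y => [|//|q] //=.
case/orP=> [/eqP->//|pq]; case/orP=> [/eqP->//|qp].
by move: (vec_lt_trans pq qp); rewrite vec_ltxx.
Qed.

Lemma vadd0 x : vadd 0 x = x.
Proof. by case: x => //= p; rewrite add0r. Qed.

Lemma vaddA a b x : vadd a (vadd b x) = vadd (a + b) x.
Proof. by case: x => //= p; rewrite addrA. Qed.

Lemma prof_le_vadd2l a x y : prof_le x y -> prof_le (vadd a x) (vadd a y).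
Proof.
case: x => [|//|p]; case: y => [|//|q] //=.
by rewrite vec_lt_add2l (can_eq (addKr a)).
Qed.

Lemma vadd_pos_le_inf a x : vec_lt 0 a -> x <> PNegInf ->
  prof_le (vadd a x) x -> x = PInf.
Proof.
case: x => [//|//|p] /= a_pos _ /orP[/eqP|].
  by move/(canRL (addrK p)); rewrite subrr => a0; rewrite a0 vec_ltxx in a_pos.
by rewrite addrC -{2}[p]addr0 vec_lt_add2l => /(vec_lt_trans a_pos); rewrite vec_ltxx.
Qed.

Lemma prof_le_vadd_chain (a : nat -> {ffun 'I_d -> int}) (X : nat -> profile d) :
  (forall n, prof_le (vadd (a n) (X n.+1)) (X n)) ->
  forall m i, prof_le (vadd (\sum_(k <- iota i m) a k) (X (i + m)%N)) (X i).
Proof.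
move=> step; elim=> [|m IH] i; first by rewrite big_nil addn0 vadd0 prof_le_refl.
rewrite /= big_cons -vaddA -addSnnS.
exact: prof_le_trans (prof_le_vadd2l (a i) (IH i.+1)) (step i).
Qed.

Section Extrema.
Variables (T : eqType) (W : T -> profile d).

Lemma pmax_ub l t : t \in l -> prof_le (W t) (pmax [seq W u | u <- l]).
Proof.
elim: l => //= u l IH; rewrite in_cons /pmax2 => /orP[/eqP->|tl].
  by case: ifP => // _; apply: prof_le_refl.
case: ifP => le_u; first exact: IH.
apply: prof_le_trans (IH tl) _.
by move: (prof_le_total (W u) (pmax [seq W u | u <- l])); rewrite le_u.
Qed.

Lemma pmin_lb l t : t \in l -> prof_le (pmin [seq W u | u <- l]) (W t).
Proof.
elim: l => //= u l IH; rewrite in_cons /pmin2 => /orP[/eqP->|tl].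
  case: ifP => le_u; first exact: prof_le_refl.
  by move: (prof_le_total (W u) (pmin [seq W u | u <- l])); rewrite le_u.
by case: ifP => le_u; [apply: prof_le_trans le_u (IH tl)|apply: IH].
Qed.

Lemma pmax_mem l : l != [::] -> exists2 t, t \in l & pmax [seq W u | u <- l] = W t.
Proof.
elim: l => //= u l IH _; case: (eqVneq l [::]) => [->|/IH [t tl ->]] /=.
  by exists u; rewrite ?mem_head // /pmax2; case: (W u).
rewrite /pmax2; case: ifP => _; first by exists t; rewrite // in_cons tl orbT.
by exists u; rewrite ?mem_head.
Qed.

Lemma pmin_mem l : l != [::] -> exists2 t, t \in l & pmin [seq W u | u <- l] = W t.
Proof.
elim: l => //= u l IH _; case: (eqVneq l [::]) => [->|/IH [t tl ->]] /=.
  by exists u; rewrite ?mem_head // /pmin2 prof_le_top.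
rewrite /pmin2; case: ifP => _; first by exists u; rewrite ?mem_head.
by exists t; rewrite // in_cons tl orbT.
Qed.
End Extrema.

Lemma pmax_mono (T : eqType) (W1 W2 : T -> profile d) l :
  (forall t, prof_le (W1 t) (W2 t)) ->
  prof_le (pmax [seq W1 u | u <- l]) (pmax [seq W2 u | u <- l]).
Proof.
move=> le12; case: (eqVneq l [::]) => [->|/(pmax_mem W1)[t tl ->]].
  exact: prof_le_refl.
exact: prof_le_trans (le12 t) (pmax_ub W2 tl).
Qed.

Lemma pmin_mono (T : eqType) (W1 W2 : T -> profile d) l :
  (forall t, prof_le (W1 t) (W2 t)) ->
  prof_le (pmin [seq W1 u | u <- l]) (pmin [seq W2 u | u <- l]).
Proof.
move=> le12; case: (eqVneq l [::]) => [->|/(pmin_mem W2)[t tl ->]].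
  exact: prof_le_refl.
exact: prof_le_trans (pmin_lb W1 tl) (le12 t).
Qed.

End ProfileOrder.

Section Colours.
Variables (V : finType) (d : nat) (c : V -> 'I_d).

Lemma sum_wpE (s : seq V) (j : 'I_d) :
  (\sum_(v <- s) wp c v) j = (count (fun v => c v == j) s)%:Z.
Proof.
elim: s => [|v s IH]; first by rewrite big_nil ffunE.
by rewrite big_cons ffunE IH /= ffunE eq_sym PoszD.
Qed.

Lemma bigmax_colour_at (s : seq V) v0 : v0 \in s ->
  (forall v, v \in s -> (c v <= c v0)%N) -> (\max_(v <- s) (c v : nat))%N = c v0.
Proof.
move=> v0s le_v0; apply/eqP; rewrite eqn_leq; apply/andP; split.
  by apply/bigmax_leqP_seq => v vs _; apply: le_v0.
exact: (@leq_bigmax_seq _ s xpredT (fun v => (c v : nat)) v0 v0s).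
Qed.

(* The entry of the profile at the largest colour of [s] is positive and all
   entries above it vanish. *)
Lemma vec_lt0_sum_wp (s : seq V) : s != [::] ->
  ~~ odd (\max_(v <- s) (c v : nat)) -> vec_lt 0 (\sum_(v <- s) wp c v).
Proof.
case: s => // v s _; set s' := v :: s.
have [v0 v0s maxv0] := @arg_maxnP _ v (mem s') (fun v => (c v : nat)) (mem_head _ _).
rewrite (bigmax_colour_at v0s maxv0) => even_v0.
have count_pos : (0 < count (fun v => c v == c v0) s')%N.
  by rewrite -has_count; apply/hasP; exists v0.
apply/vec_ltP; exists (c v0); rewrite (negbTE even_v0) sum_wpE ffunE; split.
- by rewrite eq_sym -lt0n.
- move=> j kj; rewrite sum_wpE ffunE.
  suff -> : count (fun v => c v == j) s' = 0%N by [].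
  apply/eqP; rewrite -leqn0 leqNgt -has_count; apply/hasP => -[u us /eqP cu].
  by move: (maxv0 u us) => /=; rewrite cu leqNgt kj.
- by rewrite ltz_nat.
Qed.
End Colours.

Section Arena.
Variables (V : finType) (d : nat) (E : rel V) (o : V -> bool) (c : V -> 'I_d)
  (sigma : {set V * option V}).
Hypothesis sigma_reasonable : reasonable E o c sigma.

Lemma st_run_in_V (tau : {set V * option V}) (f : nat -> option V) :
  tau \subset E1 E o -> (forall n, st_edge sigma tau (f n) (f n.+1)) ->
  exists g : nat -> V, (forall n, f n = Some (g n)) /\
    forall n, edge_sigma E o sigma (g n) (g n.+1).
Proof.
move=> tauE1 f_step; have [s f0] : exists s, f 0%N = Some s.
  by move: (f_step 0%N); case: (f 0%N) => // s; exists s.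
pose g n := if f n is Some a then a else s.
have fg n : f n = Some (g n) by rewrite /g; move: (f_step n); case: (f n).
exists g; split=> // n; move: (f_step n); rewrite !fg /st_edge /edge_sigma.
by case/orP=> [->//|/(subsetP tauE1) ->]; rewrite orbT.
Qed.

Lemma run_won0 (g : nat -> V) (f : nat -> option V) :
  (forall n, f n = Some (g n)) -> (forall n, edge_sigma E o sigma (g n) (g n.+1)) ->
  won0 c f.
Proof.
move=> fg g_step; have [N0 visited] := eventually_inf_visited g.
pose inf_colour k := exists v, inf_visited g v /\ (c v : nat) = k.
have [k [[vs [inf_vs cvs]] maxk]] :
    exists k, inf_colour k /\ forall k', inf_colour k' -> (k' <= k)%N.
  apply: (@ex_maxn_bounded _ d); first by exists (c (g N0)), (g N0); split=> //; apply: visited.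
  by move=> _ [v [_ <-]]; apply: ltnW.
have late_le n : (N0 <= n)%N -> (c (g n) <= k)%N.
  by move=> N0n; apply: maxk; exists (g n); split=> //; apply: visited.
exists k; split; [|split].
- move=> N; have [n [Nn gn]] := inf_vs N; exists n; split=> //.
  by exists vs; rewrite fg gn.
- have [n1 [N0n1 gn1]] := inf_vs N0; have [n2 [n12 gn2]] := inf_vs n1.+1.
  have cyc := cycle_map_iota g_step n12 (etrans gn2 (esym gn1)).
  have cyc_ne : map g (iota n1 (n2 - n1)) != [::].
    by rewrite -size_eq0 size_map size_iota subn_eq0 -ltnNge.
  move: (sigma_reasonable cyc_ne cyc); rewrite (bigmax_colour_at (v0 := vs)) ?cvs //.
    by apply/mapP; exists n1; rewrite // mem_iota leqnn subnKC // ltnW.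
  move=> v /mapP[m]; rewrite mem_iota => /andP[n1m _] ->.
  by apply: late_le; apply: leq_trans n1m.
- move=> k' inf_k'; have [n [N0n [v [fv <-]]]] := inf_k' N0.
  by move: fv; rewrite fg => -[<-]; apply: late_le.
Qed.

Definition Fop (isMin : V -> bool) (succ : V -> pred (option V))
    (W : option V -> profile d) : option V -> profile d :=
  fun x => if x is Some a then
    vadd (wp c a) (if isMin a then pmin [seq W t | t <- enum (succ a)]
                   else pmax [seq W t | t <- enum (succ a)])
  else PVec 0.

Section FopIterates.
Variables (isMin : V -> bool) (succ : V -> pred (option V)).
Hypothesis succ_nonempty : forall a, exists t, t \in succ a.

Lemma enum_succ_nonempty a : enum (succ a) != [::].
Proof.
have [t t_succ] := succ_nonempty a.
by apply/eqP => enum0; move: (mem_enum (succ a) t); rewrite enum0 t_succ.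
Qed.

Lemma Fop_mono W1 W2 : (forall y, prof_le (W1 y) (W2 y)) ->
  forall x, prof_le (Fop isMin succ W1 x) (Fop isMin succ W2 x).
Proof.
move=> le12 [a|]; last exact: prof_le_refl.
by apply: prof_le_vadd2l; case: (isMin a); [apply: pmin_mono|apply: pmax_mono].
Qed.

Lemma Fop_neq_bot W : (forall y, W y <> PNegInf) -> forall x, Fop isMin succ W x <> PNegInf.
Proof.
move=> Wnbot [a|] //=; have ne := enum_succ_nonempty a.
have [t _ ->] : exists2 t, t \in enum (succ a) &
    (if isMin a then pmin [seq W t | t <- enum (succ a)]
     else pmax [seq W t | t <- enum (succ a)]) = W t.
  by case: (isMin a); [apply: pmin_mem|apply: pmax_mem].
by case: (W t) (Wnbot t).
Qed.

Lemma iter_Fop_None i : iter i (Fop isMin succ) (@Vbot V d) None = PVec 0.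
Proof. by case: i. Qed.

Lemma iter_Fop_neq_bot i x : iter i (Fop isMin succ) (@Vbot V d) x <> PNegInf.
Proof. by elim: i x => [[]//|i IH] x; apply: Fop_neq_bot. Qed.

(* [Vbot] is the top element, so the iterates decrease by monotonicity of [Fop]. *)
Lemma iter_Fop_decr i x :
  prof_le (iter i.+1 (Fop isMin succ) (@Vbot V d) x) (iter i (Fop isMin succ) (@Vbot V d) x).
Proof.
elim: i x => [|i IH] x; last exact: Fop_mono.
by case: x => [a|]; [apply: prof_le_top|apply: prof_le_refl].
Qed.
End FopIterates.

Lemma path_profile_cons a p :
  path_profile c (Some a :: p) = wp c a + path_profile c p.
Proof. by rewrite /path_profile big_cons. Qed.

Lemma path_profile_bot : path_profile c [:: (None : option V)] = 0.
Proof. by rewrite /path_profile big_cons big_nil addr0. Qed.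

Section UpperBound.
Variables (tau : {set V * option V}) (W : option V -> profile d).
Hypothesis tauE1 : tau \subset E1 E o.
Hypothesis tau_total : forall a, exists t, st_edge sigma tau (Some a) t.
Hypothesis W_bot : W None = PVec 0.
Hypothesis W_neq_bot : forall x, W x <> PNegInf.
Hypothesis W_edge : forall a t, st_edge sigma tau (Some a) t ->
  prof_le (vadd (wp c a) (W t)) (W (Some a)).

Lemma finite_play_le p x : path (st_edge sigma tau) x p -> last x p = None ->
  prof_le (PVec (path_profile c (x :: p))) (W x).
Proof.
elim: p x => [|y p IH] [a|] //; first by rewrite path_profile_bot W_bot prof_le_refl.
case/andP=> /= ay p_path p_end; rewrite path_profile_cons.
exact: prof_le_trans (prof_le_vadd2l (wp c a) (IH y p_path p_end)) (W_edge ay).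
Qed.

(* Going once around a cycle of the run, [W] drops by at least the profile of
   the cycle, which is positive since the cycle is 0-dominated; so [W] is [PInf]
   on the cycle, hence at [s]. *)
Lemma infinite_play_top (f : nat -> option V) s : f 0%N = Some s ->
  (forall n, st_edge sigma tau (f n) (f n.+1)) -> W (Some s) = PInf.
Proof.
move=> f0 f_step; have [g [fg g_step]] := st_run_in_V tauE1 f_step.
have g0 : g 0%N = s by move: f0; rewrite fg => -[].
have edge_g n : prof_le (vadd (wp c (g n)) (W (Some (g n.+1)))) (W (Some (g n))).
  by apply: W_edge; rewrite -!fg.
have chain := @prof_le_vadd_chain _ (fun n => wp c (g n)) (fun n => W (Some (g n))) edge_g.
have [i [j [ij gij]]] := finite_run_repeats g.
have cyc := cycle_map_iota g_step ij (esym gij).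
have cyc_ne : map g (iota i (j - i)) != [::].
  by rewrite -size_eq0 size_map size_iota subn_eq0 -ltnNge.
have pos := vec_lt0_sum_wp cyc_ne (sigma_reasonable cyc_ne cyc); rewrite big_map in pos.
have Wi_top : W (Some (g i)) = PInf.
  have loop := chain (j - i)%N i; rewrite subnKC ?(ltnW ij) // -gij in loop.
  exact: vadd_pos_le_inf pos (@W_neq_bot _) loop.
by apply: prof_le_topE; move: (chain i 0%N) => /=; rewrite add0n Wi_top g0.
Qed.

Lemma play_profile_le s x : PlayProfile c sigma tau s x -> prof_le x (W (Some s)).
Proof.
case=> [[p [p_path [p_max ->]]]|[f [f0 [f_step [[_ ->]|[_ ->]]]]]].
- apply: finite_play_le => //; case p_end: (last (Some s) p) => [a|] //.
  by have [t at_edge] := tau_total a; move: (p_max t); rewrite p_end at_edge.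
- by rewrite (infinite_play_top f0 f_step) prof_le_refl.
- exact: prof_le_bot.
Qed.
End UpperBound.

Section LowerBound.
Variables (tau : {set V * option V}) (Wq : nat -> option V -> profile d).
Hypothesis tauE1 : tau \subset E1 E o.
Hypothesis Wq_bot : forall i, Wq i None = PVec 0.
Hypothesis Wq_step : forall i a, exists t, st_edge sigma tau (Some a) t /\
  prof_le (Wq i.+1 (Some a)) (vadd (wp c a) (Wq i t)).

Lemma path_ge_or_long i a : exists p, path (st_edge sigma tau) (Some a) p /\
  ((last (Some a) p = None /\ prof_le (Wq i (Some a)) (PVec (path_profile c (Some a :: p))))
   \/ (None \notin p /\ size p = i)).
Proof.
elim: i a => [|i IH] a; first by exists [::]; split=> //; right.
have [[b|] [ab le_ab]] := Wq_step i a.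
- have [p [p_path [[p_end le_p]|[p_V p_size]]]] := IH b;
    exists (Some b :: p); (split; first by apply/andP); [left|right].
    split=> //; rewrite path_profile_cons; apply: prof_le_trans le_ab _.
    exact: (prof_le_vadd2l (wp c a) le_p).
  by rewrite in_cons negb_or p_V /= p_size.
- exists [:: None]; split; first by apply/andP.
  left; split=> //; rewrite path_profile_cons path_profile_bot addr0.
  by move: le_ab; rewrite Wq_bot /= addr0.
Qed.

Lemma exists_play_ge i s : (#|V| <= i)%N ->
  exists x, PlayProfile c sigma tau s x /\ prof_le (Wq i (Some s)) x.
Proof.
move=> Vi; have [p [p_path [[p_end le_p]|[p_V p_size]]]] := path_ge_or_long i s.
  exists (PVec (path_profile c (Some s :: p))); split=> //.
  by left; exists p; do 2!split=> //; move=> y; rewrite p_end.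
exists PInf; split; last exact: prof_le_top.
have not_uniq : ~~ uniq (Some s :: p).
  apply/negP => /card_uniqP card_p.
  have : (#|Some s :: p| <= #|predC1 (None : option V)|)%N.
    apply/subset_leq_card/subsetP => y; rewrite !inE => /orP[/eqP->//|yp].
    by apply: contraTneq yp => ->.
  by rewrite card_p cardC1 card_option /= p_size ltnNge Vi.
have [i0 [j0 [ij jp loop]]] := uniqPn (Some s) not_uniq.
have [f [f0 f_step]] := path_lasso p_path ij jp loop.
have [g [fg g_step]] := st_run_in_V tauE1 f_step.
by right; exists f; do 2!split=> //; left; split=> //; apply: run_won0 fg g_step.
Qed.
End LowerBound.

Lemma isMaxOf_play_profile (tau : {set V * option V}) (W : option V -> profile d) s :
  tau \subset E1 E o -> (forall a, exists t, st_edge sigma tau (Some a) t) ->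
  W None = PVec 0 -> (forall x, W x <> PNegInf) ->
  (forall a t, st_edge sigma tau (Some a) t -> prof_le (vadd (wp c a) (W t)) (W (Some a))) ->
  (exists x, PlayProfile c sigma tau s x /\ prof_le (W (Some s)) x) ->
  isMaxOf (PlayProfile c sigma tau s) (W (Some s)).
Proof.
move=> tauE1 tau_total W_bot W_neq_bot W_edge [x [play_x le_x]].
have ub := play_profile_le tauE1 tau_total W_bot W_neq_bot W_edge.
have W_s : W (Some s) = x := prof_le_anti le_x (ub _ _ play_x).
by rewrite W_s; split=> // y /ub; rewrite W_s.
Qed.
End Arena.

Section Valuation.
Variables (V : finType) (d : nat) (E : rel V) (o : V -> bool) (c : V -> 'I_d)
  (sigma : {set V * option V}).
Hypothesis E_total : forall v, exists w, E v w.
Hypothesis sigma_strategy : strategy0 E o sigma.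
Hypothesis sigma_reasonable : reasonable E o c sigma.

Definition succ_sigma (a : V) : pred (option V) :=
  if o a then [pred t | (a, t) \in E1 E o] else [pred t | (a, t) \in sigma].

Local Notation Vi i := (iter i (Fop c o succ_sigma) (@Vbot V d)).

Lemma iter_Fsigma i : iter i (Fsigma E o c sigma) (@Vbot V d) = Vi i.
Proof.
elim: i => //= i ->; apply: functional_extensionality => -[a|] //=.
by rewrite /succ_sigma; case: (o a).
Qed.

Lemma succ_sigma_nonempty a : exists t, t \in succ_sigma a.
Proof.
rewrite /succ_sigma; case: ifP => o_a.
  by have [w Ew] := E_total a; exists (Some w); rewrite !inE /= o_a Ew.
by have [t sigma_at] := sigma_strategy.2 a (negbT o_a); exists t.
Qed.

Lemma strategy1_st_total tau : strategy1 E o tau ->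
  forall a, exists t, st_edge sigma tau (Some a) t.
Proof.
move=> [_ tau_total] a; rewrite /st_edge; case: (boolP (o a)) => [/tau_total|/sigma_strategy.2].
  by case=> t tau_at; exists t; rewrite tau_at orbT.
by case=> t sigma_at; exists t; rewrite sigma_at.
Qed.

Lemma play_profile_ge_Vi tau i s : strategy1 E o tau -> (#|V| <= i)%N ->
  exists x, PlayProfile c sigma tau s x /\ prof_le (Vi i (Some s)) x.
Proof.
move=> [tauE1 tau_total] Vi_big.
apply: (exists_play_ge sigma_reasonable tauE1) Vi_big => [j|j a].
  exact: iter_Fop_None.
rewrite /= /succ_sigma; case: ifP => o_a.
  have [t tau_at] := tau_total a o_a; exists t; split; first by rewrite /st_edge tau_at orbT.
  by apply/prof_le_vadd2l/pmin_lb; rewrite mem_enum o_a inE (subsetP tauE1).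
have [t + ->] := pmax_mem (Vi j) (enum_succ_nonempty succ_sigma_nonempty a).
rewrite /succ_sigma o_a mem_enum inE => sigma_at.
by exists t; rewrite /st_edge sigma_at prof_le_refl.
Qed.

Lemma play_profile_has_max tau s : strategy1 E o tau ->
  exists m, isMaxOf (PlayProfile c sigma tau s) m.
Proof.
move=> tau_strategy; have tau_st_total := strategy1_st_total tau_strategy.
pose succ_tau a : pred (option V) := [pred t | st_edge sigma tau (Some a) t].
have succ_tau_nonempty a : exists t, t \in succ_tau a by apply: tau_st_total.
pose Wt j := iter j (Fop c (fun=> false) succ_tau) (@Vbot V d).
exists (Wt #|V| (Some s)).
apply: (isMaxOf_play_profile sigma_reasonable tau_strategy.1 tau_st_total).
- exact: iter_Fop_None.
- exact: iter_Fop_neq_bot.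
- move=> a t at_edge; apply: prof_le_trans (iter_Fop_decr _ _ _ _ _).
  by apply/prof_le_vadd2l/pmax_ub; rewrite mem_enum.
- apply: (exists_play_ge sigma_reasonable tau_strategy.1) (leqnn _) => [j|j a].
    exact: iter_Fop_None.
  have [t + Et] := pmax_mem (Wt j) (enum_succ_nonempty succ_tau_nonempty a).
  by rewrite mem_enum => at_edge; exists t; rewrite [Wt j.+1 _]/= Et prof_le_refl.
Qed.

Lemma optimal_strategy1 i s : (#|V| <= i)%N ->
  exists tau, strategy1 E o tau /\ isMaxOf (PlayProfile c sigma tau s) (Vi i (Some s)).
Proof.
move=> Vi_big.
pose tau := [set e : V * option V | [&& o e.1, e \in E1 E o &
  prof_le (Vi i e.2) (pmin [seq Vi i t | t <- enum (succ_sigma e.1)])]].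
have tauE1 : tau \subset E1 E o by apply/subsetP => e; rewrite inE => /and3P[].
have tau_strategy : strategy1 E o tau.
  split=> // a o_a.
  have [t + min_t] := pmin_mem (Vi i) (enum_succ_nonempty succ_sigma_nonempty a).
  rewrite mem_enum /succ_sigma o_a inE => at_E1.
  by exists t; rewrite inE /= o_a at_E1 min_t prof_le_refl.
exists tau; split=> //.
apply: (isMaxOf_play_profile sigma_reasonable tauE1 (strategy1_st_total tau_strategy)).
- exact: iter_Fop_None.
- exact: iter_Fop_neq_bot succ_sigma_nonempty i.
- move=> a t /orP[sigma_at|tau_at]; apply: prof_le_trans (iter_Fop_decr _ _ _ _ _) => //=.
    have /subsetP/(_ _ sigma_at) := sigma_strategy.1; rewrite inE /= => /andP[o_a _].
    by rewrite (negbTE o_a); apply/prof_le_vadd2l/pmax_ub; rewrite mem_enum /succ_sigma (negbTE o_a).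
  by move: tau_at; rewrite inE /= => /and3P[-> _]; apply: prof_le_vadd2l.
- exact: play_profile_ge_Vi.
Qed.
End Valuation.

Theorem mainTheorem7 (V : finType) (d : nat) (E : rel V) (o : V -> bool) (c : V -> 'I_d)
  (HE : forall v, exists w, E v w)
  (sigma : {set V * option V})
  (Hsigma : strategy0 E o sigma)
  (Hreas : reasonable E o c sigma) :
  forall i : nat, (#|V| <= i)%N ->
    forall x : option V,
      Valuation E o c sigma x (iter i (Fsigma E o c sigma) (@Vbot V d) x).
Proof.
move=> i Vi_big [s|]; rewrite iter_Fsigma; last exact: iter_Fop_None.
have [tau [tau_strategy tau_max]] := optimal_strategy1 HE Hsigma Hreas s Vi_big.
split; first by move=> tau'; apply: (play_profile_has_max Hsigma Hreas).
split; first by exists tau.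
move=> m [tau' [tau'_strategy [play_m m_max]]].
have [x [play_x le_x]] := play_profile_ge_Vi HE Hsigma Hreas s tau'_strategy Vi_big.
exact: prof_le_trans le_x (m_max x play_x).
Qed.
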